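(* Let $T$ be a $\pi$-increasing tree whose vertex-set $\mathcal{S}$ consists of two or more blocks of $\pi$; let $M$ be its maximum vertex and $m=\max(\mathcal{S}\setminus\pi^M)$ its second maximum vertex. (a) If $T$ is reducible, then $T$ can be written uniquely as $T=\mathrm{spl}(T_1,M;T_2,t)$ where $T_1,T_2$ are $\pi$-increasing trees such that $M$ is a vertex of $T_1$, $t$ is a vertex of $T_2$, and $T_1$ is irreducible. Moreover, if $1$ is a vertex of $T$, then $1$ is a vertex of $T_2$. (b) If $T$ is irreducible, then $T$ can be written uniquely as $T=\mathrm{spl}(T_1,m;T_2,t)$ where $T_1,T_2$ are $\pi$-increasing trees such that $m$ is a vertex of $T_1$, $t$ and $M$ are vertices of $T_2$ with $t<m$, and $T_1$ and $T_2$ are both irreducible.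
   Context: Standing assumptions: $r\ge2$ and $\pi$ is a set partition of $\{1,\dots,r\}$ having $\{1\}$ as a block; its blocks are $\pi_i$ with maxima $\mu_i$; $\pi^x$ denotes the block containing $x$. An unordered increasing tree is a rooted tree on distinct positive integers, sons unordered, each son larger than its father. A $\pi$-increasing tree is an unordered increasing tree $T$ whose vertex-set is a union of blocks of $\pi$ and such that for any two elements $i<j$ of a same block of $\pi$ contained in $V(T)$, $i$ is an ancestor of $j$ in $T$. $v$-decomposition: for a vertex $v$ of $T$ with chain $a_1<\dots<a_\ell=v$ from the root to $v$, removing the chain edges leaves components $T^{(a_j)}$ rooted at $a_j$. Splice: for unordered increasing trees $T_1,T_2$ with disjoint vertex-sets and $v_1\in V(T_1)$, $v_2\in V(T_2)$, $v_1>v_2$, $\mathrm{spl}(T_1,v_1;T_2,v_2)$ is the tree on $V(T_1)\cup V(T_2)$ obtained by merging the root-to-$v_1$ chain of $T_1$ and the root-to-$v_2$ chain of $T_2$ into one increasing chain (ending at $v_1$) and attaching at each chain vertex its component from the $v_1$-decomposition of $T_1$ or the $v_2$-decomposition of $T_2$. $v$-dependence graph $G_v(T)$: directed graph on the blocks of $\pi$ contained in $V(T)$; for each such block $\pi_i$ whose maximum $\mu_i$ is not on the chain $a_1,\dots,a_\ell$, $\mu_i$ is a non-root vertex of a unique $T^{(a_j)}$ and there is an edge (possibly a loop) $\pi_i\to\pi^{a_j}$; no other edges. A $\pi$-increasing tree with maximum vertex $M$ is irreducible if $G_M(T)$ is connected (ignoring directions), reducible otherwise. *)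

From HB Require Import structures.
From mathcomp Require Import all_boot.
Set Implicit Arguments. Unset Strict Implicit. Unset Printing Implicit Defensive.

(* Vertices are labels in {1,...,r}, living in 'I_r.+1 (the label 0 is never
   used: trees and blocks are required to avoid it). *)

Section PiTrees.
Variable r : nat.
Notation V := ('I_r.+1).

(* A rooted unordered tree on a vertex set tV, encoded by its parent map:
   the root is its own parent, and tpar is the identity off tV. *)
Record tree := Tree { tV : {set V}; tpar : {ffun V -> V} }.

Definition maxv (S : {set V}) : V := inord (\max_(i in S) (i : nat)).

Definition is_incr_tree (T : tree) : bool :=
  [&& tV T != set0,
      #|[set x in tV T | tpar T x == x]| == 1,
      [forall x in tV T, (tpar T x != x) ==> ((tpar T x \in tV T) && (tpar T x < x))]
    & [forall x in ~: tV T, tpar T x == x]].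

Definition ancestor (T : tree) (a x : V) : bool := fconnect (tpar T) x a.

Definition pi_incr (P : {set {set V}}) (T : tree) : bool :=
  [&& is_incr_tree T,
      tV T \subset [set i : V | 0 < i],
      [forall B in P, (B \subset tV T) || [disjoint B & tV T]]
    & [forall B in P, (B \subset tV T) ==>
         [forall i in B, forall j in B, (i < j) ==> ancestor T i j]]].

Definition chain (T : tree) (v : V) : {set V} :=
  [set a in tV T | ancestor T a v].

(* the chain vertex a_j such that x lies in the component T^(a_j) of the
   v-decomposition: the deepest (= largest) chain vertex that is an ancestor of x *)
Definition anchor (T : tree) (v x : V) : V :=
  maxv (chain T v :&: [set a | ancestor T a x]).

Definition spl (T1 : tree) (v1 : V) (T2 : tree) (v2 : V) : tree :=
  let C := chain T1 v1 :|: chain T2 v2 in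
  Tree (tV T1 :|: tV T2)
    [ffun x => if x \in C then
                 (if [exists c in C, c < x] then maxv [set c in C | c < x] else x)
               else if x \in tV T1 then tpar T1 x
               else if x \in tV T2 then tpar T2 x
               else x].

Definition blocks_in (P : {set {set V}}) (T : tree) : {set {set V}} :=
  [set B in P | B \subset tV T].

Definition dep_edge (P : {set {set V}}) (T : tree) (v : V) (B B' : {set V}) : bool :=
  [&& B \in blocks_in P T, B' \in blocks_in P T,
      maxv B \notin chain T v
    & B' == pblock P (anchor T v (maxv B))].

Definition dep_connected (P : {set {set V}}) (T : tree) (v : V) : bool :=
  [forall B in blocks_in P T, forall B' in blocks_in P T,
     connect [rel X Y | dep_edge P T v X Y || dep_edge P T v Y X] B B'].

Definition irreducible (P : {set {set V}}) (T : tree) : bool :=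
  dep_connected P T (maxv (tV T)).

Definition reducible (P : {set {set V}}) (T : tree) : bool := ~~ irreducible P T.

End PiTrees.

From mathcomp Require Import all_boot zify.
Set Implicit Arguments. Unset Strict Implicit. Unset Printing Implicit Defensive.

(* In the dependence graph [G_v(T)] a block [B] has an out-edge only when [max B] is
   off the chain to [v], and it then points to the block of the anchor of [max B];
   anchors increase strictly along such edges, so every component of [G_v(T)]
   contains exactly one sink, a block whose maximum lies on the chain.  Let [T1] and
   [T2] be the restrictions of [T] to the blocks inside, resp. outside, the
   component of [pi^v], and [t] the deepest chain vertex of [T2]: then
   [T = spl(T1, v; T2, t)] with [G_v(T1)] connected, and conversely any such splice
   forces [V(T1)] to be that component, hence uniqueness.
   (a) is the case [v = M]; the root block [{1}] is a sink other than [pi^M], so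
   [1] lies in [T2].
   (b) is the case [v = m].  The block of the deepest common ancestor [c] of [m] and
   [M] is a sink of [G_m(T)] other than [pi^m], and [pi^M] is linked to it, so [M]
   lies in [T2].  Contracting the component of [pi^m] to [pi^c] maps each edge of
   the connected graph [G_M(T)] to a path of [G_M(T2)], so [T2] is irreducible; [T1]
   is irreducible because its maximum is [m]. *)

Section Maxv.
Variable r : nat.
Notation V := ('I_r.+1).
Implicit Types (S D : {set V}) (x y : V).

Lemma leq_maxv S x : x \in S -> x <= maxv S.
Proof.
move=> xS; rewrite /maxv inordK; first exact: leq_bigmax_cond.
by apply/bigmax_leqP => i _; rewrite -ltnS.
Qed.

Lemma maxv_mem S x : x \in S -> maxv S \in S.
Proof.
move=> xS; have S_gt0 : 0 < #|S| by apply/card_gt0P; exists x.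
case: (eq_bigmax_cond (fun i : V => (i : nat)) S_gt0) => i0 i0S e.
by rewrite /maxv e inord_val.
Qed.

Lemma maxv_eq S x : x \in S -> (forall y, y \in S -> y <= x) -> maxv S = x.
Proof.
move=> xS xmax; apply/val_inj/eqP; rewrite eqn_leq leq_maxv // andbT.
exact: xmax (maxv_mem xS).
Qed.

Lemma maxv_subset S D : D \subset S -> maxv S \in D -> maxv D = maxv S.
Proof.
move=> sDS mD; apply: maxv_eq => // y yD; apply: leq_maxv; exact: (subsetP sDS).
Qed.

Lemma eq_maxv S D : S =i D -> maxv S = maxv D.
Proof. by move=> eSD; congr maxv; apply/setP. Qed.

Lemma ord_ltn_ind (Q : V -> Prop) :
  (forall x, (forall y, y < x -> Q y) -> Q x) -> forall x, Q x.
Proof.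
move=> IHQ x; suff: forall n (y : V), y < n -> Q y by apply; exact: (ltnSn x).
elim=> [|n IHn] y //; rewrite ltnS => le_yn; apply: IHQ => z lt_zy.
by apply: IHn; exact: leq_trans lt_zy le_yn.
Qed.

End Maxv.

(** * Ancestors, chains and anchors *)

Section Ancestor.
Variable r : nat.
Notation V := ('I_r.+1).
Implicit Types (T : tree r) (x y a b c v : V).

Lemma ancestorE T a x :
  ancestor T a x = (a == x) || ((tpar T x != x) && ancestor T a (tpar T x)).
Proof.
rewrite /ancestor; apply/idP/idP.
  move/connectP=> [p pth ->]; elim: p x pth => [|y p IHp] x /=; first by rewrite eqxx.
  move=> /andP[/eqP fx pth].
  case: (eqVneq (tpar T x) x) => [fxx|nfx] /=.
    have yx : y = x by rewrite -fx fxx.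
    by subst y; rewrite fxx in pth; move: (IHp x pth); rewrite fxx eqxx.
  rewrite orbC; apply/orP; left; apply/connectP; exists p => //; by rewrite fx.
case/orP=> [/eqP->|/andP[_ h]]; first exact: connect0.
by apply: connect_trans h; apply: connect1 => /=.
Qed.

Lemma ancestor_refl T x : ancestor T x x.
Proof. by rewrite ancestorE eqxx. Qed.

Lemma ancestor_trans T a b c : ancestor T a b -> ancestor T b c -> ancestor T a c.
Proof. by move=> ab bc; exact: connect_trans bc ab. Qed.

Lemma ancestor_tpar T x : ancestor T (tpar T x) x.
Proof. by rewrite ancestorE; case: eqVneq => //= _; exact: ancestor_refl. Qed.

Lemma ancestor_tpar_neq T a x : ancestor T a x -> a != x -> ancestor T a (tpar T x).
Proof. by rewrite ancestorE => /orP[/eqP->|/andP[]//]; rewrite eqxx. Qed.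

Section IncreasingTree.
Variable T : tree r.
Hypothesis incT : is_incr_tree T.

Lemma tpar_notin x : x \notin tV T -> tpar T x = x.
Proof.
by case/and4P: incT => _ _ _ /forallP/(_ x); rewrite in_setC => /implyP h /h/eqP.
Qed.

Lemma tpar_in x : x \in tV T -> tpar T x != x -> (tpar T x \in tV T) && (tpar T x < x).
Proof. by case/and4P: incT => _ _ /forall_inP/(_ x) h _ /h/implyP. Qed.

Lemma tpar_lt x : tpar T x != x -> tpar T x < x.
Proof.
move=> nfx; case: (boolP (x \in tV T)) => xV; first by case/andP: (tpar_in xV nfx).
by move: nfx; rewrite tpar_notin ?eqxx.
Qed.

Lemma tpar_mem x : x \in tV T -> tpar T x \in tV T.
Proof.
by move=> xV; case: (eqVneq (tpar T x) x) => [->//|nfx]; case/andP: (tpar_in xV nfx).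
Qed.

Lemma ancestor_leq a x : ancestor T a x -> a <= x.
Proof.
elim/ord_ltn_ind: x => x IHx.
rewrite ancestorE => /orP[/eqP->//|/andP[nfx ax]].
exact: leq_trans (IHx _ (tpar_lt nfx) ax) (ltnW (tpar_lt nfx)).
Qed.

Lemma ancestor_mem a x : ancestor T a x -> x \in tV T -> a \in tV T.
Proof.
elim/ord_ltn_ind: x => x IHx.
rewrite ancestorE => /orP[/eqP->//|/andP[nfx ax]] xV.
by apply: (IHx _ (tpar_lt nfx)) => //; exact: tpar_mem.
Qed.

Lemma ancestor_total a b x :
  ancestor T a x -> ancestor T b x -> ancestor T a b || ancestor T b a.
Proof.
elim/ord_ltn_ind: x => x IHx.
rewrite (ancestorE _ a) => /orP[/eqP->|/andP[nfx ax]]; first by move=> ->; rewrite orbT.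
rewrite ancestorE => /orP[/eqP->|/andP[_ bx]].
  by rewrite (ancestor_trans ax (ancestor_tpar _ _)).
exact: IHx (tpar_lt nfx) ax bx.
Qed.

Lemma ancestor_total_leq a b x :
  ancestor T a x -> ancestor T b x -> a <= b -> ancestor T a b.
Proof.
move=> ax bx le_ab; case/orP: (ancestor_total ax bx) => // ba.
have -> : a = b by apply/val_inj/eqP; rewrite eqn_leq le_ab (ancestor_leq ba).
exact: ancestor_refl.
Qed.

Lemma root_unique : exists x0, [/\ x0 \in tV T, tpar T x0 = x0 &
   forall x, x \in tV T -> tpar T x = x -> x = x0].
Proof.
case/and4P: incT => _ /cards1P[x0 e_roots] _ _.
have : x0 \in [set x in tV T | tpar T x == x] by rewrite e_roots set11.
rewrite inE => /andP[x0V /eqP fx0]; exists x0; split => // x xV fx.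
by apply/set1P; rewrite -e_roots inE xV fx eqxx.
Qed.

Lemma root_ancestor x0 x :
  x0 \in tV T -> tpar T x0 = x0 -> x \in tV T -> ancestor T x0 x.
Proof.
move=> x0V fx0; case: root_unique => y0 [_ _ root_eq].
rewrite (root_eq _ x0V fx0); elim/ord_ltn_ind: x => x IHx xV.
case: (eqVneq (tpar T x) x) => [fx|nfx]; first by rewrite -(root_eq _ xV fx) ancestor_refl.
apply: ancestor_trans (ancestor_tpar _ _).
by apply: IHx; [exact: tpar_lt | exact: tpar_mem].
Qed.

End IncreasingTree.
End Ancestor.

Section Chains.
Variable r : nat.
Notation V := ('I_r.+1).
Implicit Types (D W : {set V}) (T U : tree r) (x y a b c v : V).

(* The parent map of [spl] on the merged chain. *)
Definition below D x : V :=
  if [exists c in D, c < x] then maxv [set c in D | c < x] else x.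

Lemma belowP D x : [exists c in D, c < x] ->
  [/\ below D x \in D, below D x < x & forall c, c \in D -> c < x -> c <= below D x].
Proof.
move=> exD; rewrite /below exD; case/exists_inP: exD => c0 c0D lt_c0x.
have c0_below : c0 \in [set c in D | c < x] by rewrite inE c0D.
have := maxv_mem c0_below; rewrite inE => /andP[-> ->]; split => // c cD lt_cx.
by apply: leq_maxv; rewrite inE cD.
Qed.

Lemma below_id D x : ~~ [exists c in D, c < x] -> below D x = x.
Proof. by rewrite /below => /negbTE->. Qed.

Lemma ancestor_below U D : (forall x, x \in D -> tpar U x = below D x) ->
  forall x, x \in D -> forall a, ancestor U a x = (a \in D) && (a <= x).
Proof.
move=> parD; elim/ord_ltn_ind=> x IHx xD a.
rewrite ancestorE parD //; case: (boolP [exists c in D, c < x]) => exD.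
  case: (belowP exD) => bD lt_bx bmax.
  rewrite neq_ltn lt_bx /= IHx //; apply/idP/idP.
    case/orP=> [/eqP->|/andP[aD le_ab]]; first by rewrite xD leqnn.
    by rewrite aD (leq_trans le_ab (ltnW lt_bx)).
  case/andP=> aD le_ax; case: (eqVneq a x) => //= ne_ax.
  rewrite aD /=; apply: bmax => //; rewrite ltn_neqAle le_ax andbT.
  by apply: contra_neq ne_ax => /val_inj.
rewrite below_id // eqxx /= orbF; apply/idP/idP; first by move/eqP->; rewrite xD leqnn.
case/andP=> aD le_ax; case: (eqVneq a x) => // ne_ax.
move: exD; rewrite negb_exists_in => /forall_inP/(_ a aD).
by rewrite ltn_neqAle le_ax andbT negbK => /eqP/val_inj/eqP; rewrite (negbTE ne_ax).
Qed.

Section IncreasingTree.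
Variable T : tree r.
Hypothesis incT : is_incr_tree T.

Lemma in_chain v a : (a \in chain T v) = (a \in tV T) && ancestor T a v.
Proof. by rewrite inE. Qed.

Lemma chain_mem v a : a \in chain T v -> a \in tV T.
Proof. by rewrite in_chain => /andP[]. Qed.

Lemma chain_ancestor v a : a \in chain T v -> ancestor T a v.
Proof. by rewrite in_chain => /andP[]. Qed.

Lemma chain_leq v a : a \in chain T v -> a <= v.
Proof. by move/chain_ancestor/(ancestor_leq incT). Qed.

Lemma chain_self v : v \in tV T -> v \in chain T v.
Proof. by move=> vV; rewrite in_chain vV ancestor_refl. Qed.

Lemma chain_root v x0 : v \in tV T -> x0 \in tV T -> tpar T x0 = x0 -> x0 \in chain T v.
Proof. by move=> vV x0V fx0; rewrite in_chain x0V (root_ancestor incT x0V fx0 vV). Qed.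

Lemma chain_ancestor_leq v a b :
  a \in chain T v -> b \in chain T v -> a <= b -> ancestor T a b.
Proof. by move=> /chain_ancestor av /chain_ancestor bv; exact: (ancestor_total_leq incT av bv). Qed.

Lemma chain_ancestor_closed v a x :
  x \in chain T v -> ancestor T a x -> a \in chain T v.
Proof.
move=> xC ax; rewrite in_chain (ancestor_mem incT ax (chain_mem xC)).
exact: ancestor_trans ax (chain_ancestor xC).
Qed.

Lemma tpar_chain v x : v \in tV T -> x \in chain T v -> tpar T x = below (chain T v) x.
Proof.
move=> vV xC; case: (eqVneq (tpar T x) x) => [fx|nfx].
  rewrite below_id // negb_exists_in; apply/forall_inP => c cC; rewrite -leqNgt.
  exact: (ancestor_leq incT (root_ancestor incT (chain_mem xC) fx (chain_mem cC))).
have [pV lt_px] := andP (tpar_in incT (chain_mem xC) nfx).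
have pC : tpar T x \in chain T v by exact: chain_ancestor_closed xC (ancestor_tpar _ _).
have exC : [exists c in chain T v, c < x] by apply/exists_inP; exists (tpar T x).
case: (belowP exC) => bC lt_bx bmax; apply/val_inj/eqP.
rewrite eqn_leq (bmax _ pC lt_px) /=; apply: (ancestor_leq incT).
by apply: ancestor_tpar_neq; [exact: chain_ancestor_leq bC xC (ltnW lt_bx) | rewrite neq_ltn lt_bx].
Qed.

Lemma ancestor_chain v x a : v \in tV T -> x \in chain T v ->
  ancestor T a x = (a \in chain T v) && (a <= x).
Proof. by move=> vV xC; apply: (ancestor_below _ xC) => y; exact: tpar_chain. Qed.

Lemma tpar_neq_off_chain v x :
  v \in tV T -> x \in tV T -> x \notin chain T v -> tpar T x != x.
Proof. by move=> vV xV xC; apply/eqP => fx; move: xC; rewrite chain_root. Qed.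

Section Anchor.
Variable v : V.
Hypothesis vV : v \in tV T.

Lemma anchor_spec x : x \in tV T ->
  [/\ anchor T v x \in chain T v, ancestor T (anchor T v x) x &
      forall c, c \in chain T v -> ancestor T c x -> c <= anchor T v x].
Proof.
move=> xV; case: (root_unique incT) => x0 [x0V fx0 _].
have x0_anc : x0 \in chain T v :&: [set a | ancestor T a x].
  by rewrite inE chain_root // inE root_ancestor.
have := maxv_mem x0_anc; rewrite /anchor inE => /andP[-> ]; rewrite inE => ->.
by split => // c cC cx; apply: leq_maxv; rewrite inE cC inE.
Qed.

Lemma anchor_in_chain x : x \in tV T -> anchor T v x \in chain T v.
Proof. by case/anchor_spec. Qed.

Lemma anchor_ancestor x : x \in tV T -> ancestor T (anchor T v x) x.
Proof. by case/anchor_spec. Qed.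

Lemma anchor_max x c : x \in tV T -> c \in chain T v -> ancestor T c x -> c <= anchor T v x.
Proof. by case/anchor_spec => _ _; apply. Qed.

Lemma anchor_mem x : x \in tV T -> anchor T v x \in tV T.
Proof. by move/anchor_in_chain/chain_mem. Qed.

Lemma anchor_eq x c : x \in tV T -> c \in chain T v -> ancestor T c x ->
  (forall d, d \in chain T v -> ancestor T d x -> d <= c) -> anchor T v x = c.
Proof.
move=> xV cC cx cmax; apply/val_inj/eqP; rewrite eqn_leq anchor_max // andbT.
by apply: cmax; [exact: anchor_in_chain | exact: anchor_ancestor].
Qed.

Lemma anchor_id x : x \in chain T v -> anchor T v x = x.
Proof.
move=> xC; apply: anchor_eq (chain_mem xC) xC (ancestor_refl _ _) _.
by move=> d _ /(ancestor_leq incT).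
Qed.

Lemma anchor_tpar x : x \in tV T -> x \notin chain T v ->
  anchor T v x = anchor T v (tpar T x).
Proof.
move=> xV xC; have pV := tpar_mem incT xV.
apply: anchor_eq => //; first exact: anchor_in_chain.
  exact: ancestor_trans (anchor_ancestor pV) (ancestor_tpar _ _).
move=> d dC dx; apply: anchor_max => //; apply: ancestor_tpar_neq dx _.
by apply: contraNneq xC => <-.
Qed.

End Anchor.
End IncreasingTree.
End Chains.

(** * Restriction to a set of vertices *)

Section Restriction.
Variable r : nat.
Notation V := ('I_r.+1).
Implicit Types (W : {set V}) (T : tree r) (x y a v : V).

(* The subtree of [T] on [W]: the part of the chain to [v] lying in [W] is re-linked into a chain. *)
Definition restr T v W : tree r :=
  Tree W [ffun x => if x \in W then (if x \in chain T v then below (chain T v :&: W) x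
                                    else tpar T x) else x].

Lemma tree_ext T U : tV T = tV U -> tpar T =1 tpar U -> T = U.
Proof. by case: T => VT pT; case: U => VU pU /= -> epar; congr Tree; exact/ffunP. Qed.

Variables (T : tree r) (v : V) (W : {set V}).
Hypothesis incT : is_incr_tree T.
Hypothesis vV : v \in tV T.
Hypothesis sWV : W \subset tV T.
Hypothesis W_tpar_closed : forall x, x \in W -> x \notin chain T v -> tpar T x \in W.
Notation R := (restr T v W).

Lemma restr_tpar x : tpar R x = if x \in W then (if x \in chain T v then
  below (chain T v :&: W) x else tpar T x) else x.
Proof. by rewrite /= ffunE. Qed.

Lemma restr_ancestor x a : x \in W -> ancestor R a x = (a \in W) && ancestor T a x.
Proof.
elim/ord_ltn_ind: x a => x IHx a xW.
case: (boolP (x \in chain T v)) => xC.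
  have xCW : x \in chain T v :&: W by rewrite inE xC xW.
  have parCW y : y \in chain T v :&: W -> tpar R y = below (chain T v :&: W) y.
    by rewrite inE => /andP[yC yW]; rewrite restr_tpar yW yC.
  rewrite (ancestor_below parCW xCW) (ancestor_chain incT _ vV xC) inE.
  by case: (a \in W); case: (a \in chain T v).
have xV : x \in tV T by exact: (subsetP sWV).
have nfx := tpar_neq_off_chain incT vV xV xC.
rewrite ancestorE restr_tpar xW (negbTE xC) nfx /= IHx ?W_tpar_closed //; last exact: tpar_lt.
rewrite [ancestor T a x]ancestorE nfx /=.
by case: eqVneq => [->|] //=; rewrite xW.
Qed.

Lemma anchor_closed x : x \in W -> anchor T v x \in W.
Proof.
elim/ord_ltn_ind: x => x IHx xW; have xV : x \in tV T by exact: (subsetP sWV).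
case: (boolP (x \in chain T v)) => xC; first by rewrite anchor_id.
rewrite (anchor_tpar incT vV xV xC); apply: IHx; last exact: W_tpar_closed.
exact: (tpar_lt incT (tpar_neq_off_chain incT vV xV xC)).
Qed.

Lemma restr_incr : W != set0 -> is_incr_tree R.
Proof.
case/set0Pn => w wW.
have awCW : anchor T v w \in chain T v :&: W.
  by rewrite inE anchor_closed // anchor_in_chain //; exact: (subsetP sWV).
case: (arg_minnP (fun i : V => (i : nat)) awCW) => x0 x0CW x0min.
have {}x0min y : y \in chain T v :&: W -> x0 <= y by exact: x0min.
have [x0C x0W] := setIP x0CW.
have x0_bottom : ~~ [exists c in chain T v :&: W, c < x0].
  by rewrite negb_exists_in; apply/forall_inP => c /x0min; rewrite -leqNgt.
apply/and4P; split.
- by apply/set0Pn; exists w.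
- apply/cards1P; exists x0; apply/setP => x; rewrite !inE restr_tpar.
  case: (boolP (x \in W)) => xW /=; last by apply/esym/negbTE; apply: contraNneq xW => ->.
  case: (boolP (x \in chain T v)) => xC.
    case: (boolP [exists c in chain T v :&: W, c < x]) => exCW.
      case: (belowP exCW) => _ lt_bx _.
      have -> : (below (chain T v :&: W) x == x) = false by apply/negbTE; rewrite neq_ltn lt_bx.
      by apply/esym/negbTE; apply: contraTneq exCW => ->.
    rewrite below_id // eqxx; apply/esym/eqP/val_inj/eqP.
    rewrite eqn_leq x0min ?andbT; last by rewrite inE xC xW.
    by move: exCW; rewrite negb_exists_in => /forall_inP/(_ _ x0CW); rewrite -leqNgt.
  have xV : x \in tV T by exact: (subsetP sWV).
  rewrite (negbTE (tpar_neq_off_chain incT vV xV xC)); apply/esym/negbTE.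
  by apply: contraNneq xC => ->.
- apply/forall_inP => x xW; apply/implyP; rewrite restr_tpar xW.
  case: (boolP (x \in chain T v)) => xC nfx; last by rewrite W_tpar_closed // tpar_lt.
  case: (boolP [exists c in chain T v :&: W, c < x]) => exCW; last by rewrite below_id ?eqxx in nfx.
  by case: (belowP exCW) => /setIP[_ ->] ->.
- by apply/forall_inP => x; rewrite inE restr_tpar => /negbTE->.
Qed.

Lemma restr_chain v' : v' \in W -> chain R v' = W :&: chain T v'.
Proof.
move=> v'W; apply/setP => a; rewrite !inE restr_ancestor //.
by case: (boolP (a \in W)) => //= aW; rewrite (subsetP sWV).
Qed.

Lemma restr_anchor v' x : v' \in W -> x \in W -> anchor T v' x \in W ->
  anchor R v' x = anchor T v' x.
Proof.
move=> v'W xW aW; have v'V := subsetP sWV _ v'W; have xV := subsetP sWV _ xW.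
have aC := anchor_in_chain incT v'V xV; have ax := anchor_ancestor incT v'V xV.
rewrite /anchor restr_chain //; apply: maxv_subset.
  apply/subsetP => a; rewrite !inE restr_ancestor //.
  by case/and3P => /and3P[_ -> ->] _ ->.
rewrite -/(anchor T v' x) !inE restr_ancestor // aW ax.
by move: aC; rewrite in_chain => ->.
Qed.

Lemma restr_pi_incr P : pi_incr P T -> W != set0 ->
  (forall B, B \in P -> (B \subset W) || [disjoint B & W]) -> pi_incr P R.
Proof.
case/and4P=> _ posV _ blocks_anc Wn0 Wblocks; apply/and4P; split.
- exact: restr_incr.
- exact: subset_trans sWV posV.
- exact/forall_inP.
- apply/forall_inP => B BP; apply/implyP => sBW; apply/forall_inP => i iB.
  apply/forall_inP => j jB; apply/implyP => lt_ij.
  move/forall_inP/(_ B BP): blocks_anc; rewrite (subset_trans sBW sWV) /=.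
  move/forall_inP/(_ i iB)/forall_inP/(_ j jB)/implyP/(_ lt_ij).
  by rewrite restr_ancestor ?(subsetP sBW) // => ->; rewrite (subsetP sBW).
Qed.

End Restriction.

(** * The dependence graph *)

Lemma connect_invariant (K : finType) (e : rel K) (Q : pred K) (u w : K) :
  Q u -> (forall y z, Q y -> e y z -> Q z) -> connect e u w -> Q w.
Proof.
move=> Qu Qe /connectP[p pth ->]; elim: p u Qu pth => [|z p IHp] u Qu //=.
by case/andP=> euz pth; apply: IHp pth; exact: Qe euz.
Qed.

Lemma connect_homo (K K' : finType) (e : rel K) (e' : rel K') (f : K -> K') (u w : K) :
  (forall y z, e y z -> connect e' (f y) (f z)) -> connect e u w -> connect e' (f u) (f w).
Proof.
move=> fe; apply: (connect_invariant (Q := fun z => connect e' (f u) (f z))) => /=.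
  exact: connect0.
by move=> y z uy /fe; exact: connect_trans.
Qed.

Section DependenceGraph.
Variable r : nat.
Notation V := ('I_r.+1).
Implicit Types (W : {set V}) (T : tree r) (x y a v : V) (B : {set V}).

Definition dep_rel (P : {set {set V}}) T v : rel {set V} :=
  [rel X Y | dep_edge P T v X Y || dep_edge P T v Y X].

Lemma dep_connectedE P T v :
  dep_connected P T v = [forall B in blocks_in P T, forall B' in blocks_in P T,
     connect (dep_rel P T v) B B'].
Proof. by []. Qed.

Lemma dep_rel_sym P T v : connect_sym (dep_rel P T v).
Proof. by apply: sym_connect_sym => X Y; rewrite /dep_rel /= orbC. Qed.

Lemma dep_edgeP P T v B B' : dep_edge P T v B B' ->
  [/\ B \in blocks_in P T, B' \in blocks_in P T, maxv B \notin chain T v &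
      B' = pblock P (anchor T v (maxv B))].
Proof. by case/and4P=> ? ? ? /eqP. Qed.

Section Blocks.
Variables (P : {set {set V}}) (T : tree r).
Hypothesis Ppart : partition P [set i : V | 0 < i].
Hypothesis piT : pi_incr P T.

Lemma pi_incr_tree : is_incr_tree T. Proof. by case/and4P: piT. Qed.

Lemma cover_part : cover P = [set i : V | 0 < i]. Proof. exact: cover_partition. Qed.

Lemma tV_cover x : x \in tV T -> x \in cover P.
Proof. by case/and4P: piT => _ /subsetP sV _ _ /sV; rewrite cover_part. Qed.

Lemma pblock_in x : x \in tV T -> pblock P x \in P.
Proof. by move/tV_cover/pblock_mem. Qed.

Lemma mem_pblock_tV x : x \in tV T -> x \in pblock P x.
Proof. by move/tV_cover; rewrite -mem_pblock. Qed.

Lemma pblock_of B x : B \in P -> x \in B -> pblock P x = B.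
Proof. by case/and3P: Ppart => _ Ptriv _; exact: def_pblock. Qed.

Lemma block_nonempty B : B \in P -> exists x, x \in B.
Proof.
case/and3P: Ppart => _ _ P0 BP; case: (set_0Vmem B) => [B0|[x xB]]; last by exists x.
by move: P0; rewrite -B0 BP.
Qed.

Lemma block_sub_or_disjoint B : B \in P -> (B \subset tV T) || [disjoint B & tV T].
Proof. by case/and4P: piT => _ _ /forall_inP blocks _ /blocks. Qed.

Lemma block_sub_tV B x : B \in P -> x \in B -> x \in tV T -> B \subset tV T.
Proof.
move=> BP xB xV; case/orP: (block_sub_or_disjoint BP) => // /disjoint_setI0/setP/(_ x).
by rewrite !inE xB xV.
Qed.

Lemma pblock_sub_tV x : x \in tV T -> pblock P x \subset tV T.
Proof. by move=> xV; exact: block_sub_tV (pblock_in xV) (mem_pblock_tV xV) xV. Qed.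

Lemma in_blocks_in B : (B \in blocks_in P T) = (B \in P) && (B \subset tV T).
Proof. by rewrite inE. Qed.

Lemma pblock_blocks_in x : x \in tV T -> pblock P x \in blocks_in P T.
Proof. by move=> xV; rewrite in_blocks_in pblock_in ?pblock_sub_tV. Qed.

Lemma maxv_block B : B \in P -> maxv B \in B.
Proof. by move=> BP; case: (block_nonempty BP) => x; exact: maxv_mem. Qed.

Lemma pblock_maxv B : B \in P -> pblock P (maxv B) = B.
Proof. by move=> BP; exact: pblock_of BP (maxv_block BP). Qed.

Lemma ancestor_maxv_pblock x : x \in tV T -> ancestor T x (maxv (pblock P x)).
Proof.
move=> xV; have BP := pblock_in xV; have xB := mem_pblock_tV xV.
move: (leq_maxv xB); rewrite leq_eqVlt => /orP[/eqP/val_inj<-|lt_xm].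
  exact: ancestor_refl.
case/and4P: piT => _ _ _ /forall_inP/(_ _ BP); rewrite pblock_sub_tV //=.
by move/forall_inP/(_ x xB)/forall_inP/(_ _ (maxv_block BP))/implyP/(_ lt_xm).
Qed.

Lemma maxv_blocks_in B : B \in blocks_in P T -> maxv B \in tV T.
Proof. by rewrite in_blocks_in => /andP[BP sBV]; exact: (subsetP sBV) (maxv_block BP). Qed.

Lemma blocks_sub_union W : W \subset tV T ->
  (forall x y, x \in W -> y \in tV T -> pblock P y = pblock P x -> y \in W) ->
  forall B, B \in P -> (B \subset W) || [disjoint B & W].
Proof.
move=> sWV Wblocks B BP; case/orP: (block_sub_or_disjoint BP) => sBV; last first.
  by rewrite (disjointWr sWV sBV) orbT.
case: (boolP [exists x in B, x \in W]) => [/exists_inP[x xB xW]|noBW].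
  apply/orP; left; apply/subsetP => y yB; apply: (Wblocks x) => //.
    exact: (subsetP sBV).
  by rewrite (pblock_of BP yB) (pblock_of BP xB).
apply/orP; right; rewrite disjoint_subset; apply/subsetP => y yB; rewrite inE.
by apply: contraNN noBW => yW; apply/exists_inP; exists y.
Qed.

Lemma restr_dep_edge v w W B B' : v \in tV T -> W \subset tV T ->
  (forall x, x \in W -> x \notin chain T v -> tpar T x \in W) -> w \in W ->
  B \subset W -> B' \subset W -> dep_edge P T w B B' -> dep_edge P (restr T v W) w B B'.
Proof.
move=> vV sWV W_closed wW sBW sB'W /dep_edgeP[Bin B'in muC eB'].
have incT := pi_incr_tree.
have BP : B \in P by move: Bin; rewrite in_blocks_in => /andP[].
have B'P : B' \in P by move: B'in; rewrite in_blocks_in => /andP[].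
have muW : maxv B \in W := subsetP sBW _ (maxv_block BP).
have aW : anchor T w (maxv B) \in W.
  apply: (subsetP sB'W); rewrite eB' mem_pblock_tV //.
  exact: (anchor_mem incT (subsetP sWV _ wW) (subsetP sWV _ muW)).
apply/and4P; split.
- by rewrite inE BP sBW.
- by rewrite inE B'P sB'W.
- by rewrite (restr_chain incT vV sWV W_closed wW) inE negb_and muC orbT.
- by rewrite (restr_anchor incT vV sWV W_closed wW muW aW) eB'.
Qed.

Section Sinks.
Variable v : V.
Hypothesis vV : v \in tV T.

Lemma dep_edge_pblock y : y \in tV T -> y \notin chain T v ->
  dep_edge P T v (pblock P y) (pblock P (anchor T v y)).
Proof.
move=> yV yC; have incT := pi_incr_tree.
have BP := pblock_in yV; have sBV := pblock_sub_tV yV.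
have y_mu := ancestor_maxv_pblock yV.
have muV : maxv (pblock P y) \in tV T by exact: (subsetP sBV) (maxv_block BP).
have muC : maxv (pblock P y) \notin chain T v.
  by apply: contraNN yC => /(chain_ancestor_closed incT); apply.
apply/and4P; split => //.
- exact: pblock_blocks_in.
- exact: pblock_blocks_in (anchor_mem incT vV yV).
apply/eqP; congr pblock; symmetry; apply: (anchor_eq incT vV muV (anchor_in_chain incT vV yV)).
  exact: ancestor_trans (anchor_ancestor incT vV yV) y_mu.
move=> d dC d_mu; apply: anchor_max => //.
case/orP: (ancestor_total incT d_mu y_mu) => // yd.
by move: yC; rewrite (chain_ancestor_closed incT dC yd).
Qed.

(* Every block has at most one out-edge in [G_v(T)]: [dep_next] follows it, and fixes the sinks. *)
Definition dep_next B :=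
  if maxv B \in chain T v then B else pblock P (anchor T v (maxv B)).

Lemma dep_edge_next B B' : dep_edge P T v B B' -> dep_next B = B'.
Proof. by case/dep_edgeP=> _ _ muC ->; rewrite /dep_next (negbTE muC). Qed.

Lemma dep_next_in B : B \in blocks_in P T -> dep_next B \in blocks_in P T.
Proof.
move=> Bin; rewrite /dep_next; case: ifP => // _; apply: pblock_blocks_in.
exact: (anchor_mem pi_incr_tree vV (maxv_blocks_in Bin)).
Qed.

Lemma anchor_dep_next_lt B : B \in blocks_in P T ->
  dep_next B != B -> dep_next (dep_next B) != dep_next B ->
  anchor T v (maxv B) < anchor T v (maxv (dep_next B)).
Proof.
move=> Bin; have incT := pi_incr_tree.
rewrite /dep_next; case: ifP => [_|_]; first by rewrite eqxx.
set a := anchor T v (maxv B) => _.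
have aV : a \in tV T := anchor_mem incT vV (maxv_blocks_in Bin).
have aC : a \in chain T v := anchor_in_chain incT vV (maxv_blocks_in Bin).
have a_mu := ancestor_maxv_pblock aV.
have le_a := anchor_max incT vV (maxv_blocks_in (pblock_blocks_in aV)) aC a_mu.
case: ifP => [_|_]; first by rewrite eqxx.
by rewrite ltn_neqAle le_a andbT; apply: contraNneq => /val_inj <-.
Qed.

Lemma dep_next_iter_in k B : B \in blocks_in P T -> iter k dep_next B \in blocks_in P T.
Proof. by move=> Bin; elim: k => //= k; exact: dep_next_in. Qed.

Lemma leq_anchor_iter k B : B \in blocks_in P T ->
  dep_next (iter k dep_next B) != iter k dep_next B ->
  k <= anchor T v (maxv (iter k dep_next B)).
Proof.
move=> Bin; elim: k => // k IHk /= not_fixed.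
have not_fixed' : dep_next (iter k dep_next B) != iter k dep_next B.
  by apply: contraNneq not_fixed => fixed; rewrite fixed fixed.
have := anchor_dep_next_lt (dep_next_iter_in k Bin) not_fixed' not_fixed.
by have := IHk not_fixed'; lia.
Qed.

(* Anchors increase strictly along non-loop edges, so [r + 1] steps reach a sink. *)
Definition dep_sink B := iter r.+1 dep_next B.

Lemma dep_sink_fixed B : B \in blocks_in P T -> dep_next (dep_sink B) = dep_sink B.
Proof.
move=> Bin; apply/eqP; apply: contraT => not_fixed.
have := leq_anchor_iter Bin not_fixed.
by have := ltn_ord (anchor T v (maxv (dep_sink B))); rewrite /dep_sink; lia.
Qed.

Lemma dep_sink_next B : B \in blocks_in P T -> dep_sink (dep_next B) = dep_sink B.
Proof. by move=> Bin; rewrite /dep_sink -iterSr iterS dep_sink_fixed. Qed.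

Lemma connect_dep_sink B1 B2 :
  connect (dep_rel P T v) B1 B2 -> B2 = B1 \/ dep_sink B1 = dep_sink B2.
Proof.
move=> c12; case: (eqVneq B2 B1) => [->|ne21]; [by left | right].
move/connectP: c12 ne21 => [p pth ->]; elim: p B1 pth => [|B p IHp] B1 /=.
  by rewrite eqxx.
case/andP=> e1 pth ne; have sink1 : dep_sink B1 = dep_sink B.
  by case/orP: e1 => /[dup] /dep_edge_next <- /dep_edgeP[? ? _ _]; rewrite dep_sink_next.
by case: (eqVneq (last B p) B) => [->//|ne']; rewrite sink1; exact: IHp.
Qed.

Lemma sinks_disconnected S1 S2 : S1 \in blocks_in P T ->
  dep_next S1 = S1 -> dep_next S2 = S2 -> S1 != S2 ->
  ~~ connect (dep_rel P T v) S1 S2.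
Proof.
move=> S1in fix1 fix2 ne12; apply/negP => /connect_dep_sink [e21|].
  by move: ne12; rewrite e21 eqxx.
by rewrite /dep_sink !iter_fix //; exact/eqP.
Qed.

End Sinks.
End Blocks.
End DependenceGraph.

(** * Splitting off the component of the block of [v] *)

Section Component.
Variable r : nat.
Notation V := ('I_r.+1).
Implicit Types (W : {set V}) (U : tree r) (x y a : V) (B : {set V}).

Variables (P : {set {set V}}) (T : tree r) (v : V).
Hypothesis Ppart : partition P [set i : V | 0 < i].
Hypothesis piT : pi_incr P T.
Hypothesis vV : v \in tV T.

Let incT := pi_incr_tree piT.

Definition comp_blocks := [set B | connect (dep_rel P T v) (pblock P v) B].
Definition comp_part := [set x in tV T | pblock P x \in comp_blocks].
Definition rest_part := [set x in tV T | pblock P x \notin comp_blocks].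
Definition split_vertex := maxv (chain T v :&: rest_part).

Lemma in_comp_part x : (x \in comp_part) = (x \in tV T) && (pblock P x \in comp_blocks).
Proof. by rewrite inE. Qed.

Lemma in_rest_part x : (x \in rest_part) = (x \in tV T) && (pblock P x \notin comp_blocks).
Proof. by rewrite inE. Qed.

Lemma comp_blocks_closed B B' : dep_rel P T v B B' ->
  (B \in comp_blocks) = (B' \in comp_blocks).
Proof. by move=> eBB'; rewrite !inE; exact: (connect_closed (dep_rel_sym P T v)). Qed.

Lemma comp_blocks_edge B B' : dep_edge P T v B B' ->
  (B \in comp_blocks) = (B' \in comp_blocks).
Proof. by move=> eBB'; apply: comp_blocks_closed; rewrite /dep_rel /= eBB'. Qed.

Lemma comp_blocks_in B : B \in comp_blocks -> B \in blocks_in P T.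
Proof.
rewrite inE; apply: connect_invariant => [|B1 B2 _]; first exact: (pblock_blocks_in Ppart piT).
by case/orP => /dep_edgeP[].
Qed.

Lemma comp_blocks_sub B : B \in comp_blocks -> B \subset comp_part.
Proof.
move=> BX; have := comp_blocks_in BX; rewrite in_blocks_in => /andP[BP sBV].
by apply/subsetP => x xB; rewrite in_comp_part (subsetP sBV) //= (pblock_of Ppart BP xB).
Qed.

Lemma comp_blocks_anchor x : x \in tV T ->
  (pblock P (anchor T v x) \in comp_blocks) = (pblock P x \in comp_blocks).
Proof.
move=> xV; case: (boolP (x \in chain T v)) => xC; first by rewrite anchor_id.
by rewrite (comp_blocks_edge (dep_edge_pblock Ppart piT vV xV xC)).
Qed.

Lemma comp_blocks_tpar x : x \in tV T -> x \notin chain T v ->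
  (pblock P (tpar T x) \in comp_blocks) = (pblock P x \in comp_blocks).
Proof.
move=> xV xC; rewrite -(comp_blocks_anchor (tpar_mem incT xV)).
by rewrite -(anchor_tpar incT vV xV xC) comp_blocks_anchor.
Qed.

Lemma comp_part_tpar_closed x : x \in comp_part -> x \notin chain T v -> tpar T x \in comp_part.
Proof. by rewrite !in_comp_part => /andP[xV xX] xC; rewrite tpar_mem // comp_blocks_tpar. Qed.

Lemma rest_part_tpar_closed x : x \in rest_part -> x \notin chain T v -> tpar T x \in rest_part.
Proof. by rewrite !in_rest_part => /andP[xV xX] xC; rewrite tpar_mem // comp_blocks_tpar. Qed.

Lemma comp_part_sub : comp_part \subset tV T.
Proof. by apply/subsetP => x; rewrite in_comp_part => /andP[]. Qed.

Lemma rest_part_sub : rest_part \subset tV T.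
Proof. by apply/subsetP => x; rewrite in_rest_part => /andP[]. Qed.

Lemma comp_rest_cover : comp_part :|: rest_part = tV T.
Proof.
apply/setP => x; rewrite inE in_comp_part in_rest_part.
by case: (x \in tV T); case: (pblock P x \in comp_blocks).
Qed.

Lemma comp_rest_disjoint : [disjoint comp_part & rest_part].
Proof.
rewrite disjoint_subset; apply/subsetP => x; rewrite in_comp_part => /andP[_ xX].
by rewrite inE in_rest_part xX andbF.
Qed.

Lemma comp_part_v : v \in comp_part.
Proof. by rewrite in_comp_part vV inE connect0. Qed.

Lemma comp_part_blocks B : B \in P -> (B \subset comp_part) || [disjoint B & comp_part].
Proof.
apply: (blocks_sub_union Ppart piT comp_part_sub) => x y.
by rewrite !in_comp_part => /andP[_ xX] -> ->.
Qed.

Lemma rest_part_blocks B : B \in P -> (B \subset rest_part) || [disjoint B & rest_part].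
Proof.
apply: (blocks_sub_union Ppart piT rest_part_sub) => x y.
by rewrite !in_rest_part => /andP[_ xX] -> ->.
Qed.

Lemma rest_part_blocks_sub B : B \in blocks_in P T -> B \notin comp_blocks ->
  B \subset rest_part.
Proof.
rewrite in_blocks_in => /andP[BP sBV] BX; apply/subsetP => x xB.
by rewrite in_rest_part (subsetP sBV) // (pblock_of Ppart BP xB).
Qed.

Lemma blocks_in_restr_rest B : B \in blocks_in P (restr T v rest_part) ->
  B \in blocks_in P T /\ B \notin comp_blocks.
Proof.
rewrite inE => /andP[BP sBY]; split.
  by rewrite in_blocks_in BP (subset_trans sBY rest_part_sub).
case: (block_nonempty Ppart BP) => x xB; move: (subsetP sBY _ xB).
by rewrite in_rest_part (pblock_of Ppart BP xB) => /andP[].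
Qed.

Lemma restr_comp_pi_incr : pi_incr P (restr T v comp_part).
Proof.
apply: (restr_pi_incr incT vV comp_part_sub comp_part_tpar_closed piT _ comp_part_blocks).
by apply/set0Pn; exists v; exact: comp_part_v.
Qed.

Lemma restr_comp_edge B B' : B \in comp_blocks -> B' \in comp_blocks ->
  dep_edge P T v B B' -> dep_edge P (restr T v comp_part) v B B'.
Proof.
move=> /comp_blocks_sub sBX /comp_blocks_sub sB'X.
exact: (restr_dep_edge Ppart piT vV comp_part_sub comp_part_tpar_closed comp_part_v sBX sB'X).
Qed.

Lemma restr_comp_connected : dep_connected P (restr T v comp_part) v.
Proof.
rewrite dep_connectedE; apply/forall_inP => B1 B1in; apply/forall_inP => B2 B2in.
have inX B : B \in blocks_in P (restr T v comp_part) -> B \in comp_blocks.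
  rewrite inE => /andP[BP sBX]; case: (block_nonempty Ppart BP) => x xB.
  by move: (subsetP sBX x xB); rewrite in_comp_part (pblock_of Ppart BP xB) => /andP[].
have c12 : connect (dep_rel P T v) B1 B2.
  move: (inX _ B1in) (inX _ B2in); rewrite !inE => c1 c2.
  by apply: connect_trans c2; rewrite dep_rel_sym.
pose f B := if B \in comp_blocks then B else pblock P v.
have := connect_homo (f := f) (e' := dep_rel P (restr T v comp_part) v) _ c12.
rewrite /f (inX _ B1in) (inX _ B2in); apply => B B' eBB'.
rewrite -(comp_blocks_closed eBB'); case: ifP => BX; last exact: connect0.
have B'X : B' \in comp_blocks by rewrite -(comp_blocks_closed eBB').
apply: connect1; rewrite /dep_rel /=.
by case/orP: eBB' => e; rewrite (restr_comp_edge _ _ e) ?orbT.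
Qed.

Section Existence.
Hypothesis rest_n0 : rest_part != set0.

Lemma split_vertex_spec : split_vertex \in chain T v /\ split_vertex \in rest_part.
Proof.
case/set0Pn: rest_n0 => w wY.
have aw : anchor T v w \in chain T v :&: rest_part.
  rewrite inE (anchor_closed incT vV rest_part_sub rest_part_tpar_closed wY) andbT.
  exact: (anchor_in_chain incT vV (subsetP rest_part_sub _ wY)).
by have := maxv_mem aw; rewrite inE => /andP[].
Qed.

Lemma split_vertex_lt : split_vertex < v.
Proof.
case: split_vertex_spec => tC tY; rewrite ltn_neqAle (chain_leq incT tC) andbT.
apply: contraTneq tY => /val_inj ->; move: comp_rest_disjoint.
by rewrite disjoint_subset => /subsetP/(_ v comp_part_v); rewrite inE.
Qed.

Lemma restr_rest_pi_incr : pi_incr P (restr T v rest_part).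
Proof.
exact: (restr_pi_incr incT vV rest_part_sub rest_part_tpar_closed piT rest_n0 rest_part_blocks).
Qed.

Lemma spl_restr_comp_rest :
  T = spl (restr T v comp_part) v (restr T v rest_part) split_vertex.
Proof.
case: split_vertex_spec => tC tY.
have chainE : chain (restr T v comp_part) v :|: chain (restr T v rest_part) split_vertex
    = chain T v.
  rewrite (restr_chain incT vV comp_part_sub comp_part_tpar_closed comp_part_v).
  rewrite (restr_chain incT vV rest_part_sub rest_part_tpar_closed tY).
  apply/setP => a; rewrite in_setU !in_setI (in_chain _ split_vertex).
  rewrite (ancestor_chain incT _ vV tC).
  case: (boolP (a \in chain T v)) => aC; last by rewrite !andbF.
  rewrite (chain_mem aC) /=; case: (boolP (a \in comp_part)) => //= aX.
  have aY : a \in rest_part by move: (chain_mem aC); rewrite -comp_rest_cover in_setU (negbTE aX).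
  by rewrite aY /=; apply: leq_maxv; rewrite in_setI aC.
apply: tree_ext => [|x]; first by rewrite /= comp_rest_cover.
rewrite /spl /= ffunE chainE; case: (boolP (x \in chain T v)) => xC.
  exact: (tpar_chain incT vV xC).
rewrite !restr_tpar; case: (boolP (x \in comp_part)) => xX; first by rewrite (negbTE xC).
case: (boolP (x \in rest_part)) => xY; first by rewrite (negbTE xC).
by rewrite tpar_notin // -comp_rest_cover inE negb_or xX.
Qed.

End Existence.
End Component.

Section Splice.
Variable r : nat.
Notation V := ('I_r.+1).
Implicit Types (x a : V).

Variables (T T1 T2 : tree r) (v t : V).
Hypotheses (inc1 : is_incr_tree T1) (inc2 : is_incr_tree T2).
Hypotheses (v1 : v \in tV T1) (t2 : t \in tV T2) (disj12 : [disjoint tV T1 & tV T2]).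
Hypotheses (lt_tv : t < v) (eT : T = spl T1 v T2 t).

Let C12 := chain T1 v :|: chain T2 t.

Lemma spl_tV : tV T = tV T1 :|: tV T2. Proof. by rewrite eT. Qed.

Lemma spl_tpar x : tpar T x = if x \in C12 then below C12 x else if x \in tV T1 then tpar T1 x
   else if x \in tV T2 then tpar T2 x else x.
Proof. by rewrite eT /spl /= ffunE. Qed.

Lemma spl_notin2 x : x \in tV T1 -> x \notin tV T2.
Proof. by move=> x1; move: disj12; rewrite disjoint_subset => /subsetP/(_ x x1); rewrite inE. Qed.

Lemma spl_notin1 x : x \in tV T2 -> x \notin tV T1.
Proof. by apply: contraTN => /spl_notin2. Qed.

Lemma spl_sub1 : tV T1 \subset tV T. Proof. by rewrite spl_tV subsetUl. Qed.
Lemma spl_sub2 : tV T2 \subset tV T. Proof. by rewrite spl_tV subsetUr. Qed.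

Lemma spl_chain : chain T v = C12.
Proof.
have vC : v \in C12 by rewrite in_setU chain_self.
apply/setP => a; rewrite in_chain (ancestor_below (D := C12) _ vC); last first.
  by move=> x xC; rewrite spl_tpar xC.
case: (boolP (a \in C12)); rewrite ?andbF // in_setU => /orP[aC|aC] /=.
  by rewrite (subsetP spl_sub1 _ (chain_mem aC)) (chain_leq inc1 aC).
by rewrite (subsetP spl_sub2 _ (chain_mem aC)) (leq_trans (chain_leq inc2 aC) (ltnW lt_tv)).
Qed.

Lemma spl_chain1 x : x \in tV T1 -> (x \in C12) = (x \in chain T1 v).
Proof.
move=> x1; rewrite in_setU; case: (boolP (x \in chain T2 t)) => [x2|]; rewrite ?orbF //.
by move: (spl_notin2 x1); rewrite (chain_mem x2).
Qed.

Lemma spl_chain2 x : x \in tV T2 -> (x \in C12) = (x \in chain T2 t).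
Proof.
move=> x2; rewrite in_setU; case: (boolP (x \in chain T1 v)) => //= x1.
by move: (spl_notin2 (chain_mem x1)); rewrite x2.
Qed.

Lemma spl_tpar_closed1 x : x \in tV T1 -> x \notin chain T v -> tpar T x \in tV T1.
Proof.
move=> x1; rewrite spl_chain => xC; rewrite spl_tpar (negbTE xC) x1.
have nfx : tpar T1 x != x by apply/eqP => fx; move: xC; rewrite spl_chain1 // chain_root.
by case/andP: (tpar_in inc1 x1 nfx).
Qed.

Lemma spl_tpar_closed2 x : x \in tV T2 -> x \notin chain T v -> tpar T x \in tV T2.
Proof.
move=> x2; rewrite spl_chain => xC; rewrite spl_tpar (negbTE xC).
have nfx : tpar T2 x != x by apply/eqP => fx; move: xC; rewrite spl_chain2 // chain_root.
by rewrite (negbTE (spl_notin1 x2)) x2; case/andP: (tpar_in inc2 x2 nfx).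
Qed.

Lemma restr_spl1 : T1 = restr T v (tV T1).
Proof.
apply: tree_ext => // x; rewrite restr_tpar.
case: (boolP (x \in tV T1)) => x1; last by rewrite tpar_notin.
case: (boolP (x \in chain T v)) => xC; last by rewrite spl_tpar -spl_chain (negbTE xC) x1.
have -> : chain T v :&: tV T1 = chain T1 v.
  apply/setP => a; rewrite inE spl_chain; case: (boolP (a \in tV T1)) => a1.
    by rewrite andbT spl_chain1.
  by rewrite andbF; apply/esym/negP => /chain_mem; rewrite (negbTE a1).
by apply: tpar_chain => //; rewrite -spl_chain1 // -spl_chain.
Qed.

Lemma restr_spl2 : T2 = restr T v (tV T2).
Proof.
apply: tree_ext => // x; rewrite restr_tpar.
case: (boolP (x \in tV T2)) => x2; last by rewrite tpar_notin.
case: (boolP (x \in chain T v)) => xC.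
  have -> : chain T v :&: tV T2 = chain T2 t.
    apply/setP => a; rewrite inE spl_chain; case: (boolP (a \in tV T2)) => a2.
      by rewrite andbT spl_chain2.
    by rewrite andbF; apply/esym/negP => /chain_mem; rewrite (negbTE a2).
  by apply: tpar_chain => //; rewrite -spl_chain2 // -spl_chain.
by rewrite spl_tpar -spl_chain (negbTE xC) (negbTE (spl_notin1 x2)) x2.
Qed.

End Splice.

Section Uniqueness.
Variable r : nat.
Notation V := ('I_r.+1).
Implicit Types (x y : V) (B : {set V}).

Variables (P : {set {set V}}) (T T1 T2 : tree r) (v t : V).
Hypotheses (Ppart : partition P [set i : V | 0 < i]) (piT : pi_incr P T).
Hypotheses (pi1 : pi_incr P T1) (pi2 : pi_incr P T2).
Hypotheses (v1 : v \in tV T1) (t2 : t \in tV T2) (disj12 : [disjoint tV T1 & tV T2]).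
Hypotheses (lt_tv : t < v) (conn1 : dep_connected P T1 v) (eT : T = spl T1 v T2 t).

Let incT := pi_incr_tree piT.
Let inc1 := pi_incr_tree pi1.
Let inc2 := pi_incr_tree pi2.
Let sub1 := spl_sub1 eT.
Let sub2 := spl_sub2 eT.
Let vV : v \in tV T := subsetP sub1 _ v1.
Let closed1 := spl_tpar_closed1 inc1 inc2 v1 disj12 lt_tv eT.
Let closed2 := spl_tpar_closed2 inc1 inc2 v1 t2 disj12 lt_tv eT.
Let eT1 := restr_spl1 inc1 inc2 v1 disj12 lt_tv eT.
Let eT2 := restr_spl2 inc1 inc2 v1 t2 disj12 lt_tv eT.

Lemma spl_dep_edge1 B B' : dep_edge P T1 v B B' -> dep_edge P T v B B'.
Proof.
case/and4P=> Bin B'in muC /eqP eB'.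
move: Bin B'in; rewrite !in_blocks_in => /andP[BP sB1] /andP[B'P sB'1].
have mu1 : maxv B \in tV T1 by exact: (subsetP sB1) (maxv_block Ppart BP).
apply/and4P; split.
- by rewrite in_blocks_in BP (subset_trans sB1 sub1).
- by rewrite in_blocks_in B'P (subset_trans sB'1 sub1).
- by move: muC; rewrite {1}eT1 (restr_chain incT vV sub1 closed1 v1) in_setI mu1.
- rewrite eB' {1}eT1 (restr_anchor incT vV sub1 closed1 v1 mu1) //.
  exact: (anchor_closed incT vV sub1 closed1).
Qed.

Lemma spl_comp_part : tV T1 = comp_part P T v.
Proof.
have pblock1 y : y \in tV T1 -> pblock P y \in blocks_in P T1.
  move=> y1; have yV := subsetP sub1 _ y1; have yP := pblock_in Ppart piT yV.
  by rewrite in_blocks_in yP (block_sub_tV pi1 yP (mem_pblock_tV Ppart piT yV) y1).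
apply/setP => x; rewrite in_comp_part inE; apply/idP/idP.
  move=> x1; rewrite (subsetP sub1) //=.
  move: conn1; rewrite dep_connectedE => /forall_inP/(_ _ (pblock1 _ v1)).
  move=> /forall_inP/(_ _ (pblock1 _ x1)); apply: connect_sub => B B' eBB'.
  by apply: connect1; case/orP: eBB' => /spl_dep_edge1 e; rewrite /dep_rel /= e ?orbT.
case/andP=> xV xX; apply: (subsetP _ _ (mem_pblock_tV Ppart piT xV)).
move: xX; apply: (connect_invariant (Q := fun B => B \subset tV T1)).
  exact: (block_sub_tV pi1 (pblock_in Ppart piT vV) (mem_pblock_tV Ppart piT vV) v1).
move=> B B' sB1 /orP[] /dep_edgeP [Bin B'in muC eB]; rewrite in_blocks_in in Bin B'in.
  case/andP: Bin => BP _; have mu1 : maxv B \in tV T1 by exact: (subsetP sB1) (maxv_block Ppart BP).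
  have a1 := anchor_closed incT vV sub1 closed1 mu1; have aV := subsetP sub1 _ a1.
  by rewrite eB; exact: (block_sub_tV pi1 (pblock_in Ppart piT aV) (mem_pblock_tV Ppart piT aV) a1).
case/andP: Bin => B'P sB'V; have muB' := maxv_block Ppart B'P.
case: (boolP (maxv B' \in tV T1)) => mu1; first exact: (block_sub_tV pi1 B'P muB' mu1).
have mu2 : maxv B' \in tV T2.
  by move: (subsetP sB'V _ muB'); rewrite (spl_tV eT) inE (negbTE mu1).
have a2 := anchor_closed incT vV sub2 closed2 mu2; have aV := subsetP sub2 _ a2.
have : anchor T v (maxv B') \in B by rewrite eB; exact: (mem_pblock_tV Ppart piT aV).
by move/(subsetP sB1) => a1; move: (spl_notin2 disj12 a1); rewrite a2.
Qed.

Lemma spl_rest_part : tV T2 = rest_part P T v.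
Proof.
apply/setP => x; rewrite in_rest_part; apply/idP/idP.
  move=> x2; rewrite (subsetP sub2) //=.
  by move: (spl_notin1 disj12 x2); rewrite spl_comp_part in_comp_part (subsetP sub2).
case/andP=> xV xX; move: xV; rewrite (spl_tV eT) in_setU => /orP[x1|//].
by move: x1; rewrite spl_comp_part in_comp_part (negbTE xX) andbF.
Qed.

Lemma spl_split_vertex : t = split_vertex P T v.
Proof.
rewrite /split_vertex -spl_rest_part; symmetry; apply: maxv_eq.
  by rewrite in_setI t2 (spl_chain inc1 inc2 v1 lt_tv eT) (spl_chain2 v t disj12) // chain_self.
move=> y; rewrite in_setI (spl_chain inc1 inc2 v1 lt_tv eT) => /andP[yC y2].
by move: yC; rewrite (spl_chain2 v t disj12) // => /(chain_leq inc2).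
Qed.

Lemma spl_unique :
  (T1, T2, t) = (restr T v (comp_part P T v), restr T v (rest_part P T v), split_vertex P T v).
Proof. by rewrite -spl_comp_part -spl_rest_part -spl_split_vertex -eT1 -eT2. Qed.

End Uniqueness.

(** * The second maximum vertex *)

Section SecondMaximum.
Variable r : nat.
Notation V := ('I_r.+1).
Implicit Types (x y a d : V) (B : {set V}).

Variables (P : {set {set V}}) (T : tree r) (M m : V).
Hypotheses (Ppart : partition P [set i : V | 0 < i]) (piT : pi_incr P T).
Hypotheses (MV : M \in tV T) (Mmax : forall x, x \in tV T -> x <= M).
Hypotheses (mV : m \in tV T) (mM : m \notin pblock P M).
Hypothesis mmax : forall x, x \in tV T -> x \notin pblock P M -> x <= m.
Hypothesis irrT : dep_connected P T M.

Let incT := pi_incr_tree piT.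
Let chain_anc := chain_ancestor_leq incT.
Let chain_closed := chain_ancestor_closed incT.
Notation X := (comp_blocks P T m).

Lemma maxv_pblock_max : maxv (pblock P M) = M.
Proof.
apply: maxv_eq (mem_pblock_tV Ppart piT MV) _ => y yM.
exact/Mmax/(subsetP (pblock_sub_tV Ppart piT MV)).
Qed.

Lemma maxv_pblock_second : maxv (pblock P m) = m.
Proof.
apply: maxv_eq (mem_pblock_tV Ppart piT mV) _ => y ym.
have yV := subsetP (pblock_sub_tV Ppart piT mV) _ ym; apply: mmax => //.
apply: contra mM => yM; rewrite -(pblock_of Ppart (pblock_in Ppart piT MV) yM).
by rewrite (pblock_of Ppart (pblock_in Ppart piT mV) ym) (mem_pblock_tV Ppart piT mV).
Qed.

Lemma second_lt_max : m < M.
Proof.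
rewrite ltn_neqAle Mmax // andbT; apply: contraNneq mM => /val_inj ->.
exact: (mem_pblock_tV Ppart piT MV).
Qed.

Lemma max_notin_chain_second : M \notin chain T m.
Proof. by apply/negP => /(chain_leq incT); have := second_lt_max; lia. Qed.

(* In the irreducible tree, [pi^M] is the only sink of [G_M(T)]. *)
Lemma dep_next_off_max B : B \in blocks_in P T -> B != pblock P M ->
  maxv B \notin chain T M /\ pblock P (anchor T M (maxv B)) != B.
Proof.
move=> Bin neBM; suff: dep_next P T M B != B by rewrite /dep_next; case: ifP; rewrite ?eqxx.
apply/negP => /eqP fixB.
have fixM : dep_next P T M (pblock P M) = pblock P M.
  by rewrite /dep_next maxv_pblock_max (chain_self MV).
have MBin := pblock_blocks_in Ppart piT MV.
have conn : connect (dep_rel P T M) (pblock P M) B.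
  by move: irrT; rewrite dep_connectedE => /forall_inP/(_ _ MBin)/forall_inP/(_ _ Bin).
by move: (sinks_disconnected Ppart piT MV MBin fixM fixB); rewrite eq_sym neBM conn => /(_ isT).
Qed.

(* The deepest common ancestor of [m] and [M]. *)
Definition meet := anchor T m M.

Lemma meet_chain_second : meet \in chain T m. Proof. exact: anchor_in_chain. Qed.
Lemma meet_mem : meet \in tV T. Proof. exact: (chain_mem meet_chain_second). Qed.
Lemma meet_chain_max : meet \in chain T M. Proof. by rewrite in_chain meet_mem anchor_ancestor. Qed.
Lemma meet_max d : d \in chain T m -> d \in chain T M -> d <= meet.
Proof. by move=> dm dM; apply: anchor_max => //; exact: chain_ancestor dM. Qed.
Lemma meet_leq_second : meet <= m. Proof. exact: (chain_leq incT meet_chain_second). Qed.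

Lemma anchor_second_above_meet y a : y \in tV T -> a \in chain T M -> meet < a ->
  ancestor T a y -> y \notin chain T m /\ anchor T m y = meet.
Proof.
move=> yV aM lt_ma ay.
have ma : ancestor T meet a := chain_anc meet_chain_max aM (ltnW lt_ma).
have below_meet d : d \in chain T m -> ancestor T d y -> d <= meet.
  move=> dm dy; case/orP: (ancestor_total incT dy ay) => [da|ad].
    exact: (meet_max dm (chain_closed aM da)).
  by move: (meet_max (chain_closed dm ad) aM); rewrite leqNgt lt_ma.
split.
  apply/negP => ym; have := below_meet _ ym (ancestor_refl _ _).
  by have := ancestor_leq incT ay; lia.
exact: anchor_eq meet_chain_second (ancestor_trans ma ay) below_meet.
Qed.

Lemma anchor_second_below_meet y : y \in tV T -> y \notin chain T M ->
  anchor T M y < meet -> y \notin chain T m /\ anchor T m y = anchor T M y.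
Proof.
move=> yV yM; move Ea: (anchor T M y) => a lt_am.
have aM : a \in chain T M by rewrite -Ea; exact: (anchor_in_chain incT MV yV).
have ay : ancestor T a y by rewrite -Ea; exact: (anchor_ancestor incT MV yV).
have not_my : ~~ ancestor T meet y.
  apply/negP => my; have := anchor_max incT MV yV meet_chain_max my; rewrite Ea; lia.
have am : a \in chain T m.
  exact: (chain_closed meet_chain_second (chain_anc aM meet_chain_max (ltnW lt_am))).
split.
  apply/negP => ym; case: (leqP y meet) => le_ym.
    by move: yM; rewrite (chain_closed meet_chain_max (chain_anc ym meet_chain_second le_ym)).
  by move: not_my; rewrite (chain_anc meet_chain_second ym (ltnW le_ym)).
apply: anchor_eq => // d dm dy; case: (leqP d meet) => le_dm.
  rewrite -Ea; apply: (anchor_max incT MV yV) => //.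
  exact: (chain_closed meet_chain_max (chain_anc dm meet_chain_second le_dm)).
by move: not_my; rewrite (ancestor_trans (chain_anc meet_chain_second dm (ltnW le_dm)) dy).
Qed.

Lemma anchor_max_second : anchor T M m = meet.
Proof.
rewrite /meet /anchor; apply: eq_maxv => a; rewrite !in_setI !inE.
by case: (a \in tV T); case: (ancestor T a M); case: (ancestor T a m).
Qed.

Lemma meet_notin_pblock_second : meet \notin pblock P m.
Proof.
have neMm : pblock P m != pblock P M.
  by apply: contraNneq mM => <-; exact: (mem_pblock_tV Ppart piT mV).
case: (dep_next_off_max (pblock_blocks_in Ppart piT mV) neMm) => _.
rewrite maxv_pblock_second anchor_max_second; apply: contraNN => mm.
by apply/eqP; exact: (pblock_of Ppart (pblock_in Ppart piT mV) mm).
Qed.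

Lemma dep_next_meet : dep_next P T m (pblock P meet) = pblock P meet.
Proof.
have cin := pblock_blocks_in Ppart piT meet_mem.
case: (eqVneq (pblock P meet) (pblock P M)) => [eMB|neMB].
  by rewrite /dep_next eMB maxv_pblock_max (negbTE max_notin_chain_second).
case: (dep_next_off_max cin neMB) => muM; set mu := maxv (pblock P meet) => ne_mu.
have muV : mu \in tV T := maxv_blocks_in Ppart cin.
have m_mu : ancestor T meet mu.
  exact: (ancestor_maxv_pblock Ppart piT meet_mem).
have lt_ma : meet < anchor T M mu.
  rewrite ltn_neqAle (anchor_max incT MV muV meet_chain_max m_mu) andbT.
  by apply: contraNneq ne_mu => /val_inj <-.
have [muC e] := anchor_second_above_meet muV (anchor_in_chain incT MV muV) lt_ma
  (anchor_ancestor incT MV muV).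
by rewrite /dep_next -/mu (negbTE muC) e.
Qed.

Lemma dep_next_second : dep_next P T m (pblock P m) = pblock P m.
Proof. by rewrite /dep_next maxv_pblock_second chain_self. Qed.

Lemma meet_block_notin_comp : pblock P meet \notin X.
Proof.
rewrite inE; apply: (sinks_disconnected Ppart piT mV (pblock_blocks_in Ppart piT mV)
  dep_next_second dep_next_meet).
apply: contraNneq meet_notin_pblock_second => ->.
exact: (mem_pblock_tV Ppart piT meet_mem).
Qed.

Lemma max_block_notin_comp : pblock P M \notin X.
Proof.
have lt_mM : meet < M by have := meet_leq_second; have := second_lt_max; lia.
have [_ eM] := anchor_second_above_meet MV (chain_self MV) lt_mM (ancestor_refl _ _).
have := dep_edge_pblock Ppart piT mV MV max_notin_chain_second.
by rewrite eM => /comp_blocks_edge ->; exact: meet_block_notin_comp.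
Qed.

Lemma max_in_rest_part : M \in rest_part P T m.
Proof. by rewrite in_rest_part MV max_block_notin_comp. Qed.

Lemma dep_edge_max_comp B : B \in blocks_in P T -> maxv B \notin chain T M ->
  (B \notin X -> pblock P (anchor T M (maxv B)) \notin X) /\
  (B \in X -> pblock P (anchor T M (maxv B)) \notin X ->
     pblock P (anchor T M (maxv B)) = pblock P meet).
Proof.
move=> Bin muM; set mu := maxv B; set a := anchor T M mu.
have muV : mu \in tV T := maxv_blocks_in Ppart Bin.
have aM : a \in chain T M := anchor_in_chain incT MV muV.
have aV : a \in tV T := chain_mem aM.
have BP : B \in P by move: Bin; rewrite in_blocks_in => /andP[].
have meetX := meet_block_notin_comp.
case: (ltngtP a meet) => [lt_am|lt_ma|/val_inj->]; last by split => // _.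
  have [muC e] := anchor_second_below_meet muV muM lt_am.
  have := dep_edge_pblock Ppart piT mV muV muC.
  by rewrite e pblock_maxv // => /comp_blocks_edge ->; split => // ->.
have [muC e] := anchor_second_above_meet muV aM lt_ma (anchor_ancestor incT MV muV).
have := dep_edge_pblock Ppart piT mV muV muC; rewrite e pblock_maxv // => /comp_blocks_edge ->.
rewrite (negbTE meetX); split => // _.
have mu'V := maxv_blocks_in Ppart (pblock_blocks_in Ppart piT aV).
have [mu'C e'] := anchor_second_above_meet mu'V aM lt_ma (ancestor_maxv_pblock Ppart piT aV).
have := dep_edge_pblock Ppart piT mV mu'V mu'C.
by rewrite e' (pblock_maxv Ppart (pblock_in Ppart piT aV)) => /comp_blocks_edge ->.
Qed.

Definition collapse_comp B := if B \in X then pblock P meet else B.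

Lemma dep_edge_collapse B B' : dep_edge P T M B B' ->
  connect (dep_rel P (restr T m (rest_part P T m)) M) (collapse_comp B) (collapse_comp B').
Proof.
move=> eBB'; have [Bin B'in muC eB'] := dep_edgeP eBB'.
have [out_out in_out] := dep_edge_max_comp Bin muC; rewrite -eB' in out_out in_out.
rewrite /collapse_comp; case: (boolP (B \in X)) => BX.
  case: (boolP (B' \in X)) => B'X; first exact: connect0.
  by rewrite (in_out BX B'X) connect0.
have B'X := out_out BX; rewrite (negbTE B'X); apply/connect1/orP; left.
have sub_rest := @rest_part_blocks_sub _ _ T m Ppart.
apply: (restr_dep_edge Ppart piT mV (rest_part_sub P T m) (rest_part_tpar_closed Ppart piT mV)
          max_in_rest_part (sub_rest _ Bin BX) (sub_rest _ B'in B'X) eBB').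
Qed.

Lemma restr_rest_connected : dep_connected P (restr T m (rest_part P T m)) M.
Proof.
rewrite dep_connectedE; apply/forall_inP => B1 B1in; apply/forall_inP => B2 B2in.
have [B1in' B1X] := blocks_in_restr_rest Ppart B1in.
have [B2in' B2X] := blocks_in_restr_rest Ppart B2in.
have c12 : connect (dep_rel P T M) B1 B2.
  by move: irrT; rewrite dep_connectedE => /forall_inP/(_ _ B1in')/forall_inP/(_ _ B2in').
have := connect_homo (f := collapse_comp) _ c12.
rewrite /collapse_comp (negbTE B1X) (negbTE B2X); apply => B B' /orP[] e.
  exact: dep_edge_collapse.
by rewrite dep_rel_sym; exact: dep_edge_collapse.
Qed.

End SecondMaximum.

(** * The two decompositions *)

Section Decomposition.
Variable r : nat.
Notation V := ('I_r.+1).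
Implicit Types (x : V) (B : {set V}) (U : tree r).

Variables (P : {set {set V}}) (T : tree r).
Hypotheses (Ppart : partition P [set i : V | 0 < i]) (piT : pi_incr P T).

Let incT := pi_incr_tree piT.

Definition decomp v :=
  (restr T v (comp_part P T v), restr T v (rest_part P T v), split_vertex P T v).

Definition max_split_spec U1 U2 t := let M := maxv (tV T) in
  pi_incr P U1 /\ pi_incr P U2 /\ M \in tV U1 /\ t \in tV U2 /\
  [disjoint tV U1 & tV U2] /\ t < M /\ irreducible P U1 /\ T = spl U1 M U2 t.

Definition second_split_spec U1 U2 t :=
  let M := maxv (tV T) in let m := maxv (tV T :\: pblock P M) in
  pi_incr P U1 /\ pi_incr P U2 /\ m \in tV U1 /\ t \in tV U2 /\
  M \in tV U2 /\ t < m /\ [disjoint tV U1 & tV U2] /\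
  irreducible P U1 /\ irreducible P U2 /\ T = spl U1 m U2 t.

Lemma decomp_split v : v \in tV T -> rest_part P T v != set0 ->
  let '(T1, T2, t) := decomp v in
  [/\ pi_incr P T1, pi_incr P T2, v \in tV T1, t \in tV T2 &
      [/\ [disjoint tV T1 & tV T2], t < v, dep_connected P T1 v & T = spl T1 v T2 t]].
Proof.
move=> vV rest_n0; have [_ tY] := split_vertex_spec Ppart piT vV rest_n0.
split; [exact: restr_comp_pi_incr | exact: restr_rest_pi_incr | exact: comp_part_v | exact: tY |].
split; [exact: comp_rest_disjoint | exact: split_vertex_lt | exact: restr_comp_connected |].
exact: spl_restr_comp_rest.
Qed.

Lemma dep_connected_rest_part0 v : rest_part P T v = set0 -> dep_connected P T v.
Proof.
move=> rest0; rewrite dep_connectedE.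
have inX B : B \in blocks_in P T -> connect (dep_rel P T v) (pblock P v) B.
  rewrite in_blocks_in => /andP[BP sBV]; case: (block_nonempty Ppart BP) => x xB.
  move: (subsetP sBV _ xB); rewrite -(comp_rest_cover P T v) rest0 setU0 in_comp_part.
  by rewrite (pblock_of Ppart BP xB) inE => /andP[].
apply/forall_inP => B1 /inX c1; apply/forall_inP => B2 /inX c2.
by apply: connect_trans c2; rewrite dep_rel_sym.
Qed.

Lemma chain_sink_notin_comp v B : v \in tV T -> maxv (pblock P v) = v ->
  B \in blocks_in P T -> maxv B \in chain T v -> B != pblock P v ->
  B \notin comp_blocks P T v.
Proof.
move=> vV vmax Bin BC neBv; rewrite inE dep_rel_sym.
apply: (sinks_disconnected Ppart piT vV Bin _ _ neBv); rewrite /dep_next ?BC //.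
by rewrite vmax chain_self.
Qed.

Local Notation M := (maxv (tV T)).
Local Notation m := (maxv (tV T :\: pblock P M)).

Lemma max_mem : M \in tV T.
Proof. by case/and4P: incT => /set0Pn[x /maxv_mem]. Qed.

Lemma max_ge x : x \in tV T -> x <= M.
Proof. exact: leq_maxv. Qed.

Lemma maxv_pblock_maxT : maxv (pblock P M) = M.
Proof. exact: (maxv_pblock_max Ppart piT max_mem max_ge). Qed.

Lemma maxv_restr_comp_max : maxv (comp_part P T M) = M.
Proof.
apply: (maxv_eq (comp_part_v P max_mem)) => x xX.
exact/max_ge/(subsetP (comp_part_sub P T M)).
Qed.

Lemma max_decomp_spec : reducible P T ->
  let '(T1, T2, t) := decomp M in max_split_spec T1 T2 t.
Proof.
move=> redT; have rest_n0 : rest_part P T M != set0.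
  by apply: contra redT => /eqP /dep_connected_rest_part0.
have [pi1 pi2 M1 t2 [disj lt_tM conn1 eT]] := decomp_split max_mem rest_n0.
have irr1 : irreducible P (restr T M (comp_part P T M)).
  by rewrite /irreducible [tV _]/= maxv_restr_comp_max.
exact: (conj pi1 (conj pi2 (conj M1 (conj t2 (conj disj (conj lt_tM (conj irr1 eT))))))).
Qed.

Lemma max_decomp_unique T1 T2 t : max_split_spec T1 T2 t -> (T1, T2, t) = decomp M.
Proof.
move=> [pi1 [pi2 [M1 [t2 [disj [lt_tM [irr1 eT]]]]]]].
have maxT1 : maxv (tV T1) = M.
  by apply: maxv_eq => // x x1; apply: max_ge; rewrite eT /= in_setU x1.
move: irr1; rewrite /irreducible maxT1 => conn1.
exact: spl_unique.
Qed.

Section SecondMaximum.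
Hypothesis two_blocks : 2 <= #|blocks_in P T|.

Lemma second_max_spec :
  [/\ m \in tV T, m \notin pblock P M & forall x, x \in tV T -> x \notin pblock P M -> x <= m].
Proof.
have [B Bin neBM] : exists2 B, B \in blocks_in P T & B != pblock P M.
  apply/exists_inP; apply: contraTT two_blocks; rewrite negb_exists_in -ltnNge ltnS.
  move=> /forall_inP only_M; rewrite -(cards1 (pblock P M)); apply: subset_leq_card.
  by apply/subsetP => B Bin; rewrite inE; apply/negPn/only_M.
have := Bin; rewrite in_blocks_in => /andP[BP sBV]; case: (block_nonempty Ppart BP) => y yB.
have yM : y \notin pblock P M.
  apply: contra neBM => yM; rewrite -(pblock_of Ppart BP yB).
  by rewrite (pblock_of Ppart (pblock_in Ppart piT max_mem) yM).
have ymD : y \in tV T :\: pblock P M by rewrite in_setD yM (subsetP sBV).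
have := maxv_mem ymD; rewrite in_setD => /andP[-> ->]; split=> // x xV xM.
by apply: leq_maxv; rewrite in_setD xM.
Qed.

Lemma one_in_max_rest (le2r : 2 <= r) (one : [set inord 1] \in P) T1 T2 t :
  max_split_spec T1 T2 t -> inord 1 \in tV T -> inord 1 \in tV T2.
Proof.
move=> /max_decomp_unique [_ -> _] oneV; rewrite in_rest_part oneV.
have val1 : ((inord 1 : V) : nat) = 1 by rewrite inordK // ltnS (leq_trans _ le2r).
have [mV mM _] := second_max_spec.
have neM1 : [set inord 1] != pblock P M.
  apply/eqP => eM; have := second_lt_max Ppart piT max_mem max_ge mV mM.
  have := tV_cover Ppart piT mV; rewrite (cover_part Ppart) inE.
  by have := mem_pblock_tV Ppart piT max_mem; rewrite -eM inE => /eqP ->; rewrite val1; lia.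
have root1 : tpar T (inord 1) = inord 1.
  case: (root_unique incT) => x0 [x0V fx0 _].
  have : x0 = inord 1.
    apply: val_inj => /=; rewrite val1; have := ancestor_leq incT (root_ancestor incT x0V fx0 oneV).
    by have := tV_cover Ppart piT x0V; rewrite (cover_part Ppart) inE val1; lia.
  by move=> <-.
have e1 : pblock P (inord 1) = [set inord 1] := pblock_of Ppart one (set11 _).
have oneC : maxv [set (inord 1 : V)] \in chain T M.
  have -> : maxv [set (inord 1 : V)] = inord 1 by apply: maxv_eq (set11 _) _ => x /set1P ->.
  exact: chain_root max_mem oneV root1.
have oneB : [set inord 1] \in blocks_in P T by rewrite -e1 (pblock_blocks_in Ppart piT oneV).
by rewrite e1 (chain_sink_notin_comp max_mem maxv_pblock_maxT oneB oneC neM1).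
Qed.

Lemma second_decomp_unique T1 T2 t : second_split_spec T1 T2 t -> (T1, T2, t) = decomp m.
Proof.
move=> [pi1 [pi2 [m1 [t2 [M2 [lt_tm [disj [irr1 [_ eT]]]]]]]]].
have [mV mM mmax] := second_max_spec.
have maxT1 : maxv (tV T1) = m.
  apply: maxv_eq => // x x1; apply: mmax; first by rewrite eT /= in_setU x1.
  have sM2 := block_sub_tV pi2 (pblock_in Ppart piT max_mem) (mem_pblock_tV Ppart piT max_mem) M2.
  by apply: contraTN x1 => /(subsetP sM2); exact: (spl_notin1 disj).
move: irr1; rewrite /irreducible maxT1 => conn1.
exact: spl_unique.
Qed.

Section Irreducible.
Hypothesis irrT : irreducible P T.

Lemma max_in_rest_part_second : M \in rest_part P T m.
Proof.
have [mV mM mmax] := second_max_spec.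
exact: (max_in_rest_part Ppart piT max_mem max_ge mV mM mmax irrT).
Qed.

Lemma maxv_comp_part_second : maxv (comp_part P T m) = m.
Proof.
have [mV mM mmax] := second_max_spec.
apply: (maxv_eq (comp_part_v P mV)) => x; rewrite in_comp_part => /andP[xV xX].
apply: (mmax) => //.
apply: contraNN (max_block_notin_comp Ppart piT max_mem max_ge mV mM mmax irrT).
by move=> xM; rewrite (pblock_of Ppart (pblock_in Ppart piT max_mem) xM) in xX.
Qed.

Lemma maxv_rest_part_second : maxv (rest_part P T m) = M.
Proof.
apply: (maxv_eq max_in_rest_part_second) => x xY.
exact/max_ge/(subsetP (rest_part_sub P T m)).
Qed.

Lemma second_decomp_spec : let '(T1, T2, t) := decomp m in second_split_spec T1 T2 t.
Proof.
have [mV mM mmax] := second_max_spec.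
have rest_n0 : rest_part P T m != set0 by apply/set0Pn; exists M; exact: max_in_rest_part_second.
have [pi1 pi2 m1 t2 [disj lt_tm conn1 eT]] := decomp_split mV rest_n0.
have irr1 : irreducible P (restr T m (comp_part P T m)).
  by rewrite /irreducible [tV _]/= maxv_comp_part_second.
have irr2 : irreducible P (restr T m (rest_part P T m)).
  rewrite /irreducible [tV _]/= maxv_rest_part_second.
  exact: (restr_rest_connected Ppart piT max_mem max_ge mV mM mmax irrT).
exact: (conj pi1 (conj pi2 (conj m1 (conj t2 (conj max_in_rest_part_second
  (conj lt_tm (conj disj (conj irr1 (conj irr2 eT))))))))).
Qed.

End Irreducible.
End SecondMaximum.
End Decomposition.

Theorem lemma3p10 (r : nat) (P : {set {set 'I_r.+1}}) (T : tree r) :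
  2 <= r ->
  partition P [set i : 'I_r.+1 | 0 < i] ->
  [set (inord 1 : 'I_r.+1)] \in P ->
  pi_incr P T ->
  2 <= #|blocks_in P T| ->
  let M := maxv (tV T) in
  let m := maxv (tV T :\: pblock P M) in
  (reducible P T ->
     (exists! p : tree r * tree r * 'I_r.+1,
        let '(T1, T2, t) := p in
        pi_incr P T1 /\ pi_incr P T2 /\ M \in tV T1 /\ t \in tV T2 /\
        [disjoint tV T1 & tV T2] /\ t < M /\ irreducible P T1 /\
        T = spl T1 M T2 t)
     /\
     (forall (T1 T2 : tree r) (t : 'I_r.+1),
        (pi_incr P T1 /\ pi_incr P T2 /\ M \in tV T1 /\ t \in tV T2 /\
        [disjoint tV T1 & tV T2] /\ t < M /\ irreducible P T1 /\
        T = spl T1 M T2 t) ->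
        (inord 1 : 'I_r.+1) \in tV T -> (inord 1 : 'I_r.+1) \in tV T2))
  /\
  (irreducible P T ->
     exists! p : tree r * tree r * 'I_r.+1,
        let '(T1, T2, t) := p in
        pi_incr P T1 /\ pi_incr P T2 /\ m \in tV T1 /\ t \in tV T2 /\
        M \in tV T2 /\ t < m /\ [disjoint tV T1 & tV T2] /\
        irreducible P T1 /\ irreducible P T2 /\ T = spl T1 m T2 t).
Proof.
move=> le2r Ppart one piT two_blocks M m; split.
  move=> redT; split; last exact: one_in_max_rest.
  exists (decomp P T M); split; first exact: max_decomp_spec.
  by move=> [[T1 T2] t] /(max_decomp_unique Ppart piT) ->.
move=> irrT; exists (decomp P T m); split; first exact: second_decomp_spec.
by move=> [[T1 T2] t] /(second_decomp_unique Ppart piT two_blocks) ->.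
Qed.
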